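(* Let $n$ and $h$ be positive integers and let $m$ and $s$ be nonnegative integers with $h\le n-m$ and $s\le m$. Then, as an identity of rational functions in $q$ and $x$, $$\sum_{j=s}^{m}\sum_{k=s}^{n}\frac{(q^{-n};q)_j(q^{-n};q)_k(x;q)_j(x;q)_k(q^{j-m-h+1};q)_{h-1}(q^{k-m-h+1};q)_{h-1}(1-q^{k-j})\,q^{2j+k}}{(q;q)_{j-s}(q;q)_{j+s}(q;q)_{k-s}(q;q)_{k+s}}$$ $$=\frac{(q;q)_n^2\,(q;q)_{h-1}\,(x;q)_s\,(x;q)_{m+h}\,(q^{s+1}/x;q)_{n-s-h}\,x^{n-s-h}\,q^{\frac{m^2+3m-s^2+s}{2}-mn-mh-h^2+h}}{(-1)^{m-s-1}(q;q)_{m-s}(q;q)_{m+s}(q;q)_{n-s}(q;q)_{n+s}(q;q)_{n-m-h}}.$$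
   Context: For an indeterminate $q$ and an integer $n\ge 0$: $(a;q)_0=1$ and $(a;q)_n=(1-a)(1-aq)\cdots(1-aq^{n-1})$. *)

From HB Require Import structures.
From mathcomp Require Import all_boot all_order all_algebra.
Set Implicit Arguments. Unset Strict Implicit. Unset Printing Implicit Defensive.
Import Order.TTheory GRing.Theory Num.Theory.
Local Open Scope ring_scope.

Definition qpoch (R : comNzRingType) (q a : R) (n : nat) : R :=
  \prod_(i < n) (1 - a * q ^+ i).

(* The field of rational functions Q(q, x) in two independent indeterminates:
   the fraction field of Q[q][x]. *)
Definition RF : fieldType := {fraction {poly {poly rat}}}.
(* q : the inner variable, seen as a constant polynomial in x *)
Definition qv : RF := tofrac (('X : {poly rat})%:P).
Definition xv : RF := tofrac ('X : {poly {poly rat}}).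

From HB Require Import structures.
From mathcomp Require Import all_boot all_order all_algebra.
From mathcomp Require Import ring zify.
Import Order.TTheory GRing.Theory Num.Theory.
Local Open Scope ring_scope.
Set Implicit Arguments. Unset Strict Implicit.

(* Let F_N(k) be the summand of the inner sums ([term]) and
   M_N^t(n) = sum_(s <= k < n) F_N(k) q^(tk) ([moment]).  Since
   (1 - q^(k-j)) q^(2j+k) = q^(2j) q^k - q^j q^(2k), the double sum is the Casoratian
   M_N^2(m+1) M_N^1(N+1) - M_N^1(m+1) M_N^2(N+1).
   Creative telescoping in k gives a three-term relation c1 M^1 + c2 M^2 + c3 M^3 = 0
   which holds both for the complete sums (upper limit N+1, beyond which (q^-N;q)_k
   vanishes) and for the sums cut at m+1 (the factor (q^(k-m-h+1);q)_(h-1) vanishes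
   for m < k < m+h).  The contiguous relation in N expresses M_N through M_(N+1), so
   the Casoratian at N is kappa_(N+1) times the one at N+1, and the right-hand side
   obeys the same recurrence.  At N = m+h the complete and cut sums differ by a single
   term, and the Casoratian collapses, via the q-Chu-Vandermonde sum, to the product
   on the right. *)

Section QPochhammer.
Variables (R : comNzRingType) (q : R).
Implicit Types (a : R) (i k n : nat).

Lemma qpoch0 a : qpoch q a 0 = 1.
Proof. by rewrite /qpoch big_ord0. Qed.

Lemma qpochS a n : qpoch q a n.+1 = qpoch q a n * (1 - a * q ^+ n).
Proof. by rewrite /qpoch big_ord_recr. Qed.

Lemma qpochD a i k : qpoch q a (i + k) = qpoch q a i * qpoch q (a * q ^+ i) k.
Proof.
elim: k => [|k IHk]; first by rewrite addn0 qpoch0 mulr1.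
by rewrite addnS !qpochS IHk exprD; ring.
Qed.

Lemma qpochMq a k : qpoch q (a * q) k * (1 - a) = qpoch q a k * (1 - a * q ^+ k).
Proof.
elim: k => [|k IHk]; first by rewrite !qpoch0 expr0 mulr1.
by rewrite !qpochS mulrAC IHk exprS; ring.
Qed.

Lemma qpoch_eq0 a i n : a * q ^+ i = 1 -> (i < n)%N -> qpoch q a n = 0.
Proof.
by move=> ai1 lt_in; rewrite -(subnKC lt_in) qpochD qpochS ai1 subrr mulr0 mul0r.
Qed.

End QPochhammer.

Lemma double_half_tri k : ((k * k.-1)./2).*2 = (k * k.-1)%N.
Proof.
rewrite -[RHS](odd_double_half (k * k.-1)) oddM.
by case: k => [|[|k]] //=; rewrite ?andbN ?andNb // negbK; case: (odd k).
Qed.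

Lemma double_half_triZ k : 2 * ((k * k.-1)./2)%:Z = k%:Z * (k%:Z - 1).
Proof. by have := double_half_tri k; move: (_./2)%N => t; case: k => [|k] /=; lia. Qed.

Lemma base_exponent_split m h s : (s <= m)%N ->
  ((m * (m + 3))./2)%:Z - ((s * s.-1)./2)%:Z - (m * (m + h))%:Z
    - (m * h)%:Z - (h * h)%:Z + h%:Z
  = (((m + h) * (m + h).-1)./2)%:Z - ((m + h) * (m + h))%:Z
    + (((h * h.-1)./2)%:Z - ((m + h) * h)%:Z)
    + (((s * s.-1)./2)%:Z - (m * s)%:Z)
    + ((m + h) * 2 + (s + s * (m - s)))%N%:Z.
Proof.
move=> /subnK <-; move: (m - s)%N => {}m; rewrite addnK.
have : ((m + s) * (m + s + 3))./2.*2 = ((m + s) * (m + s + 3))%N.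
  by set k := (m + s)%N; rewrite -[RHS]odd_double_half oddM oddD /=; case: (odd k).
have := double_half_triZ (m + s + h); have := double_half_triZ h; have := double_half_triZ s.
move: (((m + s + h) * _)./2)%N ((h * _)./2)%N ((s * _)./2)%N (((m + s) * _)./2)%N.
by move=> a b c d; rewrite !PoszM !PoszD; lia.
Qed.

Lemma signr_base (K : fieldType) m h s : (s <= m)%N ->
  (-1) ^ (m%:Z - s%:Z - 1) = - ((-1) ^+ (m + h) * (-1) ^+ h * (-1) ^+ s)^-1 :> K.
Proof.
move=> le_sm; rewrite !invfM !invr_sign.
have -> : m%:Z - s%:Z - 1 = (m - s)%N%:Z + (-1) by lia.
rewrite expfzDr ?oppr_eq0 ?oner_eq0 // exprN1 invrN1 -exprnP mulrN1 -!exprD.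
have -> : (m + h + h + s = (m - s) + (h + s) * 2)%N by lia.
by rewrite exprD exprM sqrr_sign mulr1.
Qed.

Lemma casoratian_contiguous (K : fieldType) (d1 d2 d3 a J1 J2 J3 L1 L2 L3 : K) :
  d3 != 0 -> 1 - a != 0 ->
  d1 * J1 + d2 * J2 + d3 * J3 = 0 -> d1 * L1 + d2 * L2 + d3 * L3 = 0 ->
  (J2 - a * J3) / (1 - a) * ((L1 - a * L2) / (1 - a))
    - (J1 - a * J2) / (1 - a) * ((L2 - a * L3) / (1 - a))
  = (J2 * L1 - J1 * L2) * ((d3 + a * d2 + a ^+ 2 * d1) / (d3 * (1 - a) ^+ 2)).
Proof.
move=> d3_neq0 a_neq1 recJ recL.
have solve3 (X1 X2 X3 : K) : d1 * X1 + d2 * X2 + d3 * X3 = 0 ->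
    X3 = - (d1 * X1 + d2 * X2) / d3.
  by move/eqP; rewrite addrC addr_eq0 => /eqP <-; field.
by rewrite (solve3 _ _ _ recJ) (solve3 _ _ _ recL); field; rewrite a_neq1 d3_neq0.
Qed.

Section QField.
Variables (K : fieldType) (q : K).
Hypothesis q_neq0 : q != 0.
Hypothesis q_not_root1 : forall k, (0 < k)%N -> q ^+ k != 1.
Implicit Types (a b i k n : nat) (z : int).

Lemma expq_neq0 k : q ^+ k != 0.
Proof. exact: expf_neq0. Qed.

Lemma expq_inj : injective (GRing.exp q).
Proof.
suff lt_neq a b : (a < b)%N -> q ^+ a != q ^+ b.
  move=> a b eab; have [//|] := eqVneq a b.
  by rewrite neq_ltn => /orP[]/lt_neq; rewrite eab eqxx.
move=> lt_ab; rewrite -(subnKC (ltnW lt_ab)) exprD -{1}[q ^+ a]mulr1.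
by rewrite (inj_eq (mulfI (expq_neq0 a))) eq_sym q_not_root1 // subn_gt0.
Qed.

Lemma expq_subr_neq0 a b : a != b -> q ^+ a - q ^+ b != 0.
Proof. by rewrite subr_eq0 (inj_eq expq_inj). Qed.

Lemma onem_expq_neq0 k : (0 < k)%N -> 1 - q ^+ k != 0.
Proof. by move=> k_gt0; rewrite subr_eq0 eq_sym q_not_root1. Qed.

Lemma expq_sub1_neq0 k : (0 < k)%N -> q ^+ k - 1 != 0.
Proof. by move=> k_gt0; rewrite subr_eq0 q_not_root1. Qed.

Lemma onem_expq_div_neq0 a b : a != b -> 1 - q ^+ a / q ^+ b != 0.
Proof.
move=> ne_ab; rewrite -{1}(divff (expq_neq0 b)) -mulrBl.
by rewrite mulf_neq0 ?invr_neq0 ?expq_neq0 // expq_subr_neq0 // eq_sym.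
Qed.

Lemma onem_expqV_neq0 k : (0 < k)%N -> 1 - (q ^+ k)^-1 != 0.
Proof.
move=> k_gt0; rewrite subr_eq0 eq_sym -(inj_eq (inv_inj (@invrK K))) invrK invr1.
exact: q_not_root1.
Qed.

Lemma qpoch_qq_neq0 n : qpoch q q n != 0.
Proof.
elim: n => [|n IHn]; first by rewrite qpoch0 oner_neq0.
by rewrite qpochS mulf_neq0 // -exprS onem_expq_neq0.
Qed.

Lemma expqB a b : (a <= b)%N -> q ^+ (b - a) = q ^+ b / q ^+ a.
Proof. by move=> le_ab; rewrite expfB_cond // (negbTE q_neq0). Qed.

Lemma expfz_natB z a b : z = a%:Z - b%:Z -> q ^ z = q ^+ a / q ^+ b.
Proof. by move=> ->; rewrite expfzDr // exprnN -exprnP. Qed.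

Lemma qpoch_expqN A k : (k <= A)%N ->
  qpoch q (q ^- A) k
  = (-1 : K) ^+ k * q ^ (((k * k.-1)./2)%:Z - (A * k)%:Z) * qpoch q q A / qpoch q q (A - k).
Proof.
elim: k => [|k IHk] le_kA.
  by rewrite qpoch0 subn0 expr0 mul1r muln0 subrr expr0z mul1r divff ?qpoch_qq_neq0.
have qpA : qpoch q q (A - k) = qpoch q q (A - k.+1) * (1 - q * q ^+ (A - k.+1)).
  by rewrite -qpochS; congr (qpoch q q _); lia.
have qz : q ^ (((k.+1 * k)./2)%:Z - (A * k.+1)%:Z)
          = q ^ (((k * k.-1)./2)%:Z - (A * k)%:Z) * (q ^+ k / q ^+ A).
  rewrite -(@expfz_natB (k%:Z - A%:Z)) // -expfzDr //; congr (_ ^ _).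
  have := double_half_triZ k; have := double_half_triZ k.+1.
  by move: (_./2)%N (_./2)%N => /= t t'; lia.
have eu : q ^+ (A - k.+1) = q ^+ A / (q * q ^+ k) by rewrite -exprS expqB.
have nz : 1 - q * (q ^+ A / (q * q ^+ k)) != 0 by rewrite -eu -exprS onem_expq_neq0.
rewrite qpochS IHk 1?ltnW // qpA qz exprSr eu; field.
by rewrite expq_subr_neq0 ?qpoch_qq_neq0 ?expq_neq0 ?q_neq0 // neq_ltn le_kA.
Qed.

Lemma qpoch_contig N k :
  qpoch q (q ^- N) k
  = qpoch q (q ^- N.+1) k * (1 - (q ^+ N.+1)^-1 * q ^+ k) / (1 - (q ^+ N.+1)^-1).
Proof.
have eq : (q ^+ N.+1)^-1 * q = q ^- N by rewrite exprSr invfM -mulrA mulVf ?mulr1.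
by rewrite -qpochMq eq mulfK // onem_expqV_neq0.
Qed.

Section QSums.
Variable x : K.
Hypothesis x_neq0 : x != 0.
Hypothesis x_neq_expq : forall k, x != q ^+ k.
Variable s : nat.

Local Ltac neq0 :=
  rewrite ?expq_neq0 ?qpoch_qq_neq0 ?q_neq0 ?x_neq0 ?expq_sub1_neq0 //.

Definition cv_term M j : K :=
  qpoch q (q ^- M) j * qpoch q x j * q ^+ j / (qpoch q q (j - s) * qpoch q q (j + s)).

Definition cv_value M : K :=
  qpoch q (q ^- M) s * qpoch q x s * q ^+ s * qpoch q (q ^+ s.+1 / x) (M - s)
  * x ^+ (M - s) * q ^+ s ^+ (M - s) / qpoch q q (M + s).

Definition cv_ratio M : K :=
  (1 - q ^+ s / q ^+ M.+1) * (1 - q ^+ M.+1 * q ^+ s)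
  / ((1 - (q ^+ M.+1)^-1) * x * q ^+ s * (1 - q ^+ M.+1 / x)).

Lemma x_subr_expq_neq0 k : x - q ^+ k != 0.
Proof. by rewrite subr_eq0. Qed.

Lemma onem_expq_divx_neq0 k : 1 - q ^+ k / x != 0.
Proof.
rewrite subr_eq0 eq_sym; apply: contra (x_neq_expq k) => /eqP qk_x.
by rewrite -[x]mul1r -qk_x divfK.
Qed.

Lemma cv_ratio_neq0 M : (s <= M)%N -> cv_ratio M != 0.
Proof.
move=> le_sM.
have n1 : 1 - q ^+ s / q ^+ M.+1 != 0 by rewrite onem_expq_div_neq0 // neq_ltn ltnS le_sM.
have n2 : 1 - q ^+ M.+1 * q ^+ s != 0 by rewrite -exprD onem_expq_neq0.
rewrite /cv_ratio mulf_neq0 ?mulf_neq0 // invr_neq0 //.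
by rewrite !mulf_neq0 ?onem_expqV_neq0 ?onem_expq_divx_neq0; neq0.
Qed.

Lemma cv_termS M j : (s <= j)%N ->
  cv_term M j.+1 * ((1 - q ^+ j.+1 / q ^+ s) * (1 - q ^+ j.+1 * q ^+ s))
  = cv_term M j * ((1 - q ^+ j / q ^+ M) * (1 - x * q ^+ j) * q).
Proof.
move=> le_sj; rewrite /cv_term subSn // addSn !qpochS.
have ej : q ^+ j = q ^+ (j - s) * q ^+ s by rewrite -exprD subnK.
rewrite !exprS exprD ej; field.
have n1 : 1 - q * (q ^+ (j - s) * q ^+ s * q ^+ s) != 0.
  by rewrite -ej -exprD -exprS onem_expq_neq0.
have n2 : 1 - q * q ^+ (j - s) != 0 by rewrite -exprS onem_expq_neq0.
by rewrite n1 n2; neq0.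
Qed.

Lemma cv_term_top M : cv_term M M.+1 = 0.
Proof. by rewrite /cv_term (qpoch_eq0 (i := M)) ?mul0r // mulVf ?expq_neq0. Qed.

Lemma cv_term_contig M j :
  cv_term M j = cv_term M.+1 j * (1 - (q ^+ M.+1)^-1 * q ^+ j) / (1 - (q ^+ M.+1)^-1).
Proof.
by rewrite /cv_term qpoch_contig; field; neq0.
Qed.

Lemma cv_sumS M : (s <= M)%N ->
  cv_ratio M * \sum_(s <= j < M.+2) cv_term M.+1 j = \sum_(s <= j < M.+1) cv_term M j.
Proof.
move=> le_sM; set a := (q ^+ M.+1)^-1.
have a_neq1 : 1 - a != 0 by rewrite onem_expqV_neq0.
have xa_neq1 : x * a - 1 != 0.
  have -> : x * a - 1 = (x - q ^+ M.+1) / q ^+ M.+1 by rewrite mulrBl divff ?expq_neq0.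
  by rewrite mulf_neq0 ?invr_neq0 ?x_subr_expq_neq0 ?expq_neq0.
pose G j := a / ((1 - a) * (x * a - 1)) * cv_term M.+1 j
            * ((1 - q ^+ j / q ^+ s) * (1 - q ^+ j * q ^+ s)) / q ^+ j.
have tele : \sum_(s <= j < M.+2) (cv_ratio M * cv_term M.+1 j - cv_term M j)
            = G M.+2 - G s.
  apply: telescope_sumr_eq => [|j /andP[le_sj _]]; first by lia.
  rewrite /G -(mulrA _ (cv_term M.+1 j.+1)) cv_termS // mulrA.
  rewrite (cv_term_contig M j) -/a /cv_ratio /a !exprS; field.
  by rewrite mulN1r -exprS x_subr_expq_neq0 expq_sub1_neq0 //; neq0.
have G_top : G M.+2 = 0 by rewrite /G cv_term_top mulr0 !mul0r.
have G_s : G s = 0 by rewrite /G divff ?expq_neq0 // subrr !mul0r mulr0 mul0r.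
move/eqP: tele; rewrite G_top G_s subrr sumrB subr_eq0 -mulr_sumr => /eqP ->.
by rewrite big_nat_recr /= ?cv_term_top ?addr0 //; lia.
Qed.

Lemma cv_valueS M : (s <= M)%N -> cv_ratio M * cv_value M.+1 = cv_value M.
Proof.
move=> le_sM; rewrite /cv_value /cv_ratio (qpoch_contig M s).
have -> : (M.+1 - s = (M - s).+1)%N by lia.
rewrite addSn !qpochS !exprS expqB // exprD; field.
have f1 : 1 - q * (q ^+ M * q ^+ s) != 0 by rewrite mulrA -exprS -exprD onem_expq_neq0.
have f2 : x - q * q ^+ M != 0 by rewrite -exprS x_subr_expq_neq0.
by rewrite f1 f2 -exprS expq_sub1_neq0 //; neq0.
Qed.

(* After the shift j = s + i this is the q-Chu-Vandermonde sum
   2phi1(q^(s-M), x q^s; q^(2s+1); q, q); both sides have ratio [cv_ratio] in M. *)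
Lemma q_chu_vandermonde M : (s <= M)%N -> \sum_(s <= j < M.+1) cv_term M j = cv_value M.
Proof.
move=> le_sM; rewrite -(subnKC le_sM); elim: (M - s)%N => [|d IHd].
  by rewrite addn0 big_nat1 /cv_term /cv_value subnn !qpoch0 !expr0; field; neq0.
have le_s_sd : (s <= s + d)%N by rewrite leq_addr.
apply: (mulfI (cv_ratio_neq0 le_s_sd)).
by rewrite addnS cv_sumS // cv_valueS // IHd.
Qed.

Section Casoratian.
Variables h m : nat.
Hypothesis h_gt0 : (0 < h)%N.
Hypothesis le_sm : (s <= m)%N.

Definition gap k : K := qpoch q (q ^ (k%:Z - m%:Z - h%:Z + 1)) h.-1.

Definition term N k : K :=
  qpoch q (q ^- N) k * qpoch q x k * gap k / (qpoch q q (k - s) * qpoch q q (k + s)).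

Definition moment N t n : K := \sum_(s <= k < n) term N k * q ^+ k ^+ t.

Definition casoratian N : K :=
  moment N 2 m.+1 * moment N 1 N.+1 - moment N 1 m.+1 * moment N 2 N.+1.

Lemma double_sum_casoratian N :
  \sum_(s <= j < m.+1) \sum_(s <= k < N.+1)
    (qpoch q (q ^- N) j * qpoch q (q ^- N) k
       * qpoch q x j * qpoch q x k
       * qpoch q (q ^ (j%:Z - m%:Z - h%:Z + 1)) h.-1
       * qpoch q (q ^ (k%:Z - m%:Z - h%:Z + 1)) h.-1
       * (1 - q ^ (k%:Z - j%:Z)) * q ^+ (2 * j + k)%N)
    / (qpoch q q (j - s) * qpoch q q (j + s)
       * qpoch q q (k - s) * qpoch q q (k + s))
  = casoratian N.
Proof.
rewrite /casoratian /moment !mulr_suml -sumrB; apply: eq_bigr => j _.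
rewrite !mulr_sumr -sumrB; apply: eq_bigr => k _.
rewrite (@expfz_natB (k%:Z - j%:Z) k j) // exprD mulnC exprM /term /gap.
by field; neq0.
Qed.

Lemma gapS k : gap k.+1 * (1 - q ^+ k.+1 / q ^+ (m + h)) = gap k * (1 - q ^+ k / q ^+ m).
Proof.
have qz : q ^ (k%:Z - m%:Z - h%:Z + 1) = q ^+ k.+1 / q ^+ (m + h).
  by apply: expfz_natB; lia.
rewrite /gap.
have -> : k.+1%:Z - m%:Z - h%:Z + 1 = (k%:Z - m%:Z - h%:Z + 1) + 1 by lia.
rewrite expfzDr // expr1z -qz qpochMq qz; congr (_ * (1 - _)).
rewrite -(prednK h_gt0) addnS !exprS exprD; field; neq0.
Qed.

Lemma gap_eq0 k : (m < k < m + h)%N -> gap k = 0.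
Proof.
case/andP=> lt_mk lt_k_mh; rewrite /gap (qpoch_eq0 (i := m + h - k.+1)) //; last by lia.
by rewrite (@expfz_natB _ 0 (m + h - k.+1)) ?expr0 ?mul1r ?mulVf ?expq_neq0 //; lia.
Qed.

Definition antidiff N k : K :=
  (1 - q ^+ k / q ^+ s) * (1 - q ^+ k * q ^+ s) * (1 - q ^+ k / q ^+ (m + h)) * term N k.

Lemma antidiffS N k : (s <= k)%N ->
  antidiff N k.+1
  = term N k * ((1 - q ^+ k / q ^+ N) * (1 - x * q ^+ k) * (1 - q ^+ k / q ^+ m)).
Proof.
move=> le_sk.
have -> : antidiff N k.+1 = (1 - q ^+ k.+1 / q ^+ s) * (1 - q ^+ k.+1 * q ^+ s)
    * qpoch q (q ^- N) k.+1 * qpoch q x k.+1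
    / (qpoch q q (k.+1 - s) * qpoch q q (k.+1 + s))
    * (gap k.+1 * (1 - q ^+ k.+1 / q ^+ (m + h))).
  by rewrite /antidiff /term; field; neq0.
rewrite gapS /term subSn // addSn !qpochS.
have ek : q ^+ k = q ^+ (k - s) * q ^+ s by rewrite -exprD subnK.
rewrite !exprS exprD ek; field.
have n1 : 1 - q * (q ^+ (k - s) * q ^+ s * q ^+ s) != 0.
  by rewrite -ek -exprD -exprS onem_expq_neq0.
have n2 : 1 - q * q ^+ (k - s) != 0 by rewrite -exprS onem_expq_neq0.
by rewrite n1 n2; neq0.
Qed.

Lemma antidiff_gap N : antidiff N m.+1 = 0.
Proof.
rewrite /antidiff; have [lt_1h|le_h1] := ltnP 1 h.
  by rewrite /term gap_eq0 ?mulr0 ?mul0r ?mulr0 //; lia.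
have -> : h = 1%N by lia.
by rewrite addn1 divff ?expq_neq0 // subrr mulr0 mul0r.
Qed.

Lemma term_top N : term N N.+1 = 0.
Proof. by rewrite /term (qpoch_eq0 (i := N)) ?mul0r // mulVf ?expq_neq0. Qed.

Definition coef1 N : K :=
  (q ^+ s)^-1 + q ^+ s + (q ^+ (m + h))^-1 - (q ^+ N)^-1 - x - (q ^+ m)^-1.
Definition coef2 N : K :=
  x / q ^+ N + (q ^+ N * q ^+ m)^-1 + x / q ^+ m - 1 - (q ^+ s * q ^+ (m + h))^-1
  - q ^+ s / q ^+ (m + h).
Definition coef3 N : K := (q ^+ (m + h))^-1 - x / (q ^+ N * q ^+ m).

Lemma moment_rec N n : (s <= n)%N ->
  coef1 N * moment N 1 n + coef2 N * moment N 2 n + coef3 N * moment N 3 n = antidiff N n.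
Proof.
move=> le_sn; rewrite /moment !mulr_sumr -!big_split /=.
rewrite (@telescope_sumr_eq _ s n (antidiff N)) // => [|k /andP[le_sk _]].
  by rewrite /antidiff divff ?expq_neq0 // subrr !mul0r subr0.
by rewrite antidiffS // /coef1 /coef2 /coef3 /antidiff; field; neq0.
Qed.

Lemma moment_contig N t n :
  moment N t n
  = (moment N.+1 t n - (q ^+ N.+1)^-1 * moment N.+1 t.+1 n) / (1 - (q ^+ N.+1)^-1).
Proof.
rewrite /moment mulr_sumr -sumrB mulr_suml; apply: eq_bigr => k _.
by rewrite /term (qpoch_contig N) [q ^+ k ^+ t.+1]exprS; field; neq0.
Qed.

Lemma moment_top N t : (s <= N.+1)%N -> moment N t N.+2 = moment N t N.+1.
Proof. by move=> le_sN; rewrite /moment big_nat_recr //= term_top mul0r addr0. Qed.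

Lemma coef3_neq0 N : (m + h < N)%N -> coef3 N != 0.
Proof.
move=> lt_mh_N.
have -> : coef3 N = (q ^+ (N - h) - x) / (q ^+ N * q ^+ m).
  by rewrite /coef3 expqB; [rewrite exprD; field; neq0 | lia].
by rewrite mulf_neq0 ?invr_neq0 ?mulf_neq0 ?expq_neq0 // subr_eq0 eq_sym.
Qed.

Definition kappa N : K :=
  (coef3 N + (q ^+ N)^-1 * coef2 N + (q ^+ N)^-1 ^+ 2 * coef1 N)
  / (coef3 N * (1 - (q ^+ N)^-1) ^+ 2).

Lemma kappa_neq0 N : (m + h < N)%N -> kappa N != 0.
Proof.
move=> lt_mh_N; rewrite /kappa; set a := (q ^+ N)^-1.
have -> : coef3 N + a * coef2 N + a ^+ 2 * coef1 N
          = ((q ^+ (m + h))^-1 - a) * (1 - a / q ^+ s) * (1 - a * q ^+ s).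
  by rewrite /a /coef1 /coef2 /coef3; field; neq0.
have n1 : (q ^+ (m + h))^-1 - a != 0.
  by rewrite subr_eq0 (inj_eq (inv_inj (@invrK _))) (inj_eq expq_inj) ltn_eqF.
have n2 : 1 - a / q ^+ s != 0 by rewrite /a -invfM -exprD onem_expqV_neq0 //; lia.
have n3 : 1 - a * q ^+ s != 0.
  by rewrite /a mulrC onem_expq_div_neq0 // ltn_eqF //; lia.
rewrite mulf_neq0 ?mulf_neq0 // invr_neq0 // mulf_neq0 ?coef3_neq0 // expf_neq0 // /a.
by rewrite onem_expqV_neq0 //; lia.
Qed.

Lemma casoratianS N : (m + h <= N)%N -> casoratian N = casoratian N.+1 * kappa N.+1.
Proof.
move=> le_mh_N; have le_sN : (s <= N.+1)%N by lia.
rewrite /casoratian -!(moment_top (N := N)) // !(moment_contig N) /kappa.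
apply: casoratian_contiguous.
- by apply: coef3_neq0; lia.
- by rewrite onem_expqV_neq0.
- by rewrite moment_rec ?antidiff_gap //; lia.
- by rewrite moment_rec /antidiff ?term_top ?mulr0 //; lia.
Qed.

Definition rhs N : K :=
  (qpoch q q N ^+ 2 * qpoch q q h.-1 * qpoch q x s * qpoch q x (m + h)
     * qpoch q (q ^+ s.+1 / x) (N - s - h) * x ^+ (N - s - h)
     * q ^ (((m * (m + 3))./2)%:Z - ((s * s.-1)./2)%:Z
              - (m * N)%:Z - (m * h)%:Z - (h * h)%:Z + h%:Z))
  / ((-1) ^ (m%:Z - s%:Z - 1) * qpoch q q (m - s) * qpoch q q (m + s)
     * qpoch q q (N - s) * qpoch q q (N + s) * qpoch q q (N - m - h)).

Lemma rhsS N : (m + h <= N)%N -> rhs N.+1 * kappa N.+1 = rhs N.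
Proof.
move=> le_mh_N; rewrite /rhs.
have -> : (N.+1 - s - h = (N - s - h).+1)%N by lia.
have -> : (N.+1 - s = (N - s).+1)%N by lia.
have -> : (N.+1 - m - h = (N - m - h).+1)%N by lia.
rewrite addSn !qpochS.
set E := ((m * (m + 3))./2)%:Z - ((s * s.-1)./2)%:Z.
have -> : E - (m * N.+1)%:Z - (m * h)%:Z - (h * h)%:Z + h%:Z
          = (E - (m * N)%:Z - (m * h)%:Z - (h * h)%:Z + h%:Z) + - (m%:Z).
  by rewrite mulnS; lia.
rewrite expfzDr // -exprnN.
have e1 : q ^+ (N - s - h) = q ^+ N / (q ^+ s * q ^+ h).
  by rewrite -exprD -expqB; [congr (_ ^+ _); lia | lia].
have e2 : q ^+ (N - m - h) = q ^+ N / (q ^+ m * q ^+ h).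
  by rewrite -exprD -expqB; [congr (_ ^+ _); lia | lia].
rewrite e1 e2 expqB; last by lia.
rewrite /kappa /coef1 /coef2 /coef3 !exprS !exprD; field.
have f1 : q * q ^+ N - 1 != 0 by rewrite -exprS expq_sub1_neq0.
have f2 : q * q ^+ N + - x * q ^+ h != 0.
  rewrite -exprS mulNr -(subnK (_ : h <= N.+1)%N); last by lia.
  by rewrite exprD -mulrBl mulf_neq0 ?expq_neq0 // -opprB oppr_eq0 x_subr_expq_neq0.
have f3 : q ^+ m * q ^+ h - q * q ^+ N != 0.
  by rewrite -exprS -exprD expq_subr_neq0 //; lia.
have f4 : 1 - q * (q ^+ N * q ^+ s) != 0 by rewrite mulrA -exprS -exprD onem_expq_neq0.
have f5 : q ^+ s - q * q ^+ N != 0 by rewrite -exprS expq_subr_neq0 //; lia.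
rewrite f1 f2 f3 f4 f5 expfz_eq0 oppr_eq0 oner_eq0 andbF; neq0.
Qed.

Lemma moment_split t :
  moment (m + h) t (m + h).+1
  = moment (m + h) t m.+1 + term (m + h) (m + h) * q ^+ (m + h) ^+ t.
Proof.
rewrite /moment big_nat_recr /=; last by lia.
rewrite (@big_cat_nat _ _ _ m.+1) /=; [|lia|lia].
rewrite [X in _ + X + _]big_nat_cond [X in _ + X + _]big1 ?addr0 // => k.
by case/andP=> /andP[lt_mk lt_k_mh] _; rewrite /term gap_eq0 ?lt_mk ?mulr0 ?mul0r.
Qed.

Lemma qpoch_gap j :
  qpoch q (q ^- (m + h)) j * gap j * (1 - (q ^+ (m + h))^-1 * q ^+ j)
  = qpoch q (q ^- (m + h)) h * qpoch q (q ^- m) j.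
Proof.
have qpoch_h (c : K) : qpoch q c h = (1 - c) * qpoch q (c * q) h.-1.
  by rewrite -[in LHS](prednK h_gt0) -add1n qpochD qpochS qpoch0 expr0 mulr1 mul1r expr1.
have eb : (q ^+ (m + h))^-1 * q ^+ j * q = q ^ (j%:Z - m%:Z - h%:Z + 1).
  by rewrite (@expfz_natB _ j.+1 (m + h)); [rewrite exprS; field; neq0 | lia].
have ea : q ^- (m + h) * q ^+ h = q ^- m by rewrite exprD; field; neq0.
by rewrite -mulrA [gap j * _]mulrC /gap -eb -qpoch_h -qpochD (addnC j h) qpochD ea.
Qed.

Lemma partial_moments_base :
  q ^+ (m + h) * moment (m + h) 2 m.+1 - q ^+ (m + h) ^+ 2 * moment (m + h) 1 m.+1
  = - q ^+ (m + h) ^+ 2 * qpoch q (q ^- (m + h)) h * cv_value m.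
Proof.
rewrite -q_chu_vandermonde // /moment !mulr_sumr -sumrB; apply: eq_bigr => j _.
transitivity (- q ^+ (m + h) ^+ 2 * qpoch q x j * q ^+ j
                / (qpoch q q (j - s) * qpoch q q (j + s))
              * (qpoch q (q ^- (m + h)) j * gap j * (1 - (q ^+ (m + h))^-1 * q ^+ j))).
  by rewrite /term; field; neq0.
by rewrite qpoch_gap /cv_term; field; neq0.
Qed.

Lemma casoratian_base : casoratian (m + h) = rhs (m + h).
Proof.
rewrite /casoratian !moment_split.
set J1 := moment _ 1 m.+1; set J2 := moment _ 2 m.+1; set f := term _ (m + h).
transitivity (f * (q ^+ (m + h) * J2 - q ^+ (m + h) ^+ 2 * J1)); first by ring.
rewrite /J1 /J2 partial_moments_base /f /term /cv_value /rhs.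
have -> : gap (m + h) = qpoch q q h.-1.
  by rewrite /gap (_ : _ - _ - _ + 1 = 1); [rewrite expr1z | lia].
rewrite !qpoch_expqN // ?leq_addl //.
have -> : (m + h - s - h = m - s)%N by lia.
have -> : (m + h - m - h = 0)%N by lia.
rewrite subnn addnK !qpoch0 (@signr_base K m h s le_sm).
have -> : q ^ (((m * (m + 3))./2)%:Z - ((s * s.-1)./2)%:Z - (m * (m + h))%:Z
               - (m * h)%:Z - (h * h)%:Z + h%:Z)
          = q ^ ((((m + h) * (m + h).-1)./2)%:Z - ((m + h) * (m + h))%:Z)
            * q ^ (((h * h.-1)./2)%:Z - ((m + h) * h)%:Z)
            * q ^ (((s * s.-1)./2)%:Z - (m * s)%:Z)
            * (q ^+ (m + h) ^+ 2 * (q ^+ s * q ^+ s ^+ (m - s))).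
  rewrite -!exprM -!exprD exprnP -!expfzDr //; congr (_ ^ _).
  exact: base_exponent_split.
by field; rewrite !signr_eq0 oppr_eq0 oner_eq0; neq0.
Qed.

Lemma casoratian_eq_rhs N : (m + h <= N)%N -> casoratian N = rhs N.
Proof.
move=> /subnKC <-; elim: (N - (m + h))%N => [|d IHd]; first by rewrite addn0 casoratian_base.
rewrite addnS; apply: (mulIf (kappa_neq0 (N := (m + h + d).+1) _)); first by lia.
by rewrite -casoratianS ?leq_addr // IHd rhsS ?leq_addr.
Qed.

End Casoratian.
End QSums.
End QField.

Lemma qv_neq0 : qv != 0.
Proof. by rewrite /qv tofrac_eq0 polyC_eq0 polyX_eq0. Qed.

Lemma qv_expE k : qv ^+ k = tofrac ((('X : {poly rat}) ^+ k)%:P).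
Proof. by rewrite /qv -tofracXn -rmorphXn. Qed.

Lemma qv_not_root1 k : (0 < k)%N -> qv ^+ k != 1.
Proof.
move=> k_gt0; rewrite qv_expE -tofrac1 tofrac_eq -polyC1 (inj_eq polyC_inj).
apply/negP => /eqP qk1; move: (size_polyXn rat k); rewrite qk1 size_poly1.
by case: k k_gt0 qk1.
Qed.

Lemma xv_neq0 : xv != 0.
Proof. by rewrite /xv tofrac_eq0 polyX_eq0. Qed.

Lemma xv_neq_expqv k : xv != qv ^+ k.
Proof.
rewrite qv_expE /xv tofrac_eq; apply/negP => /eqP xqk.
by move: (size_polyX {poly rat}); rewrite xqk size_polyC; case: (_ != 0).
Qed.

Theorem lemma4p3 (n h m s : nat) (hn : (0 < n)%N) (hh : (0 < h)%N)
    (hhnm : (h <= n - m)%N) (hsm : (s <= m)%N) :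
  \sum_(s <= j < m.+1) \sum_(s <= k < n.+1)
    (qpoch qv (qv ^- n) j * qpoch qv (qv ^- n) k
       * qpoch qv xv j * qpoch qv xv k
       * qpoch qv (qv ^ (j%:Z - m%:Z - h%:Z + 1)) h.-1
       * qpoch qv (qv ^ (k%:Z - m%:Z - h%:Z + 1)) h.-1
       * (1 - qv ^ (k%:Z - j%:Z)) * qv ^+ (2 * j + k)%N)
    / (qpoch qv qv (j - s) * qpoch qv qv (j + s)
       * qpoch qv qv (k - s) * qpoch qv qv (k + s))
  =
  (qpoch qv qv n ^+ 2 * qpoch qv qv h.-1 * qpoch qv xv s * qpoch qv xv (m + h)
     * qpoch qv (qv ^+ s.+1 / xv) (n - s - h) * xv ^+ (n - s - h)
     * qv ^ (((m * (m + 3))./2)%:Z - ((s * s.-1)./2)%:Z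
              - (m * n)%:Z - (m * h)%:Z - (h * h)%:Z + h%:Z))
  / ((-1) ^ (m%:Z - s%:Z - 1) * qpoch qv qv (m - s) * qpoch qv qv (m + s)
     * qpoch qv qv (n - s) * qpoch qv qv (n + s) * qpoch qv qv (n - m - h)).
Proof.
have le_mh_n : (m + h <= n)%N by lia.
rewrite (double_sum_casoratian qv_neq0 qv_not_root1).
exact: (casoratian_eq_rhs qv_neq0 qv_not_root1 xv_neq0 xv_neq_expqv hh hsm le_mh_n).
Qed.
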